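(* Let $f$ satisfy Assumption A, $g$ satisfy Assumption B, $L>L_f$, and let $(u_k)$ be a sequence of proximal gradient iterates with parameter $L$. Then $u_{k+1}(x)-u_k(x)\to0$ for almost all $x\in\Omega$.
   Context: $\Omega\subset\mathbb{R}^n$ Lebesgue measurable with finite measure. Assumption A: $f:L^2(\Omega)\to\mathbb{R}$ bounded below, weakly lower semicontinuous, Fréchet differentiable, $\nabla f$ Lipschitz with constant $L_f$. Assumption B on $g:\mathbb{R}\to\mathbb{R}\cup\{+\infty\}$: (B1) lsc, symmetric, $g(0)=0$; (B2) $g(u)<\infty$ for some $u\ne0$; (B3) one of (B3a) $g$ twice differentiable on some $(0,\epsilon)$, $\limsup_{u\searrow0}g''(u)\in(-\infty,0)$; (B3b) same differentiability, $\lim_{u\searrow0}g''(u)=-\infty$; (B3c) $\liminf_{u\searrow0}g(u)>0$; (B4) $g\ge0$. Proximal gradient iterates with parameter $L>0$: $(u_k)_{k\ge0}\subset L^2(\Omega)$, arbitrary $u_0$, each $u_{k+1}$ a global minimizer over $L^2(\Omega)$ of $f(u_k)+\int_\Omega\nabla f(u_k)(u-u_k)\,dx+\frac L2\|u-u_k\|^2_{L^2(\Omega)}+\int_\Omega g(u(x))\,dx$. *)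

From HB Require Import structures.
From mathcomp Require Import all_boot all_order all_algebra.
From mathcomp Require Import all_classical all_reals all_analysis.

Set Implicit Arguments.
Unset Strict Implicit.
Unset Printing Implicit Defensive.

Import Order.TTheory GRing.Theory Num.Theory.
Import numFieldNormedType.Exports.

Local Open Scope classical_set_scope.
Local Open Scope ring_scope.

Section L2.
Context {d : measure_display} {T : measurableType d} {R : realType}.
Variables (mu : {measure set T -> \bar R}) (Om : set T).

(** membership in L^2(Om) (functions are representatives of classes) *)
Definition inL2 (u : T -> R) : Prop :=
  measurable_fun Om u /\ (\int[mu]_(x in Om) ((u x) ^+ 2)%:E < +oo)%E.

Definition ipL2 (u v : T -> R) : R := \int[mu]_(x in Om) (u x * v x).
Definition normL2 (u : T -> R) : R := Num.sqrt (\int[mu]_(x in Om) (u x ^+ 2)).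

Definition L2_welldefined (f : (T -> R) -> R) : Prop :=
  forall u v, inL2 u -> inL2 v -> {ae mu, forall x, Om x -> u x = v x} ->
    f u = f v.

Definition L2_bounded_below (f : (T -> R) -> R) : Prop :=
  exists m : R, forall u, inL2 u -> m <= f u.

Definition L2_weak_cvg (uk : nat -> T -> R) (u : T -> R) : Prop :=
  forall w, inL2 w -> ipL2 (uk k) w @[k --> \oo] --> ipL2 u w.

Definition L2_weakly_lsc (f : (T -> R) -> R) : Prop :=
  forall (uk : nat -> T -> R) (u : T -> R),
    (forall k, inL2 (uk k)) -> inL2 u -> L2_weak_cvg uk u ->
    ((f u)%:E <= limn_einf (fun k => (f (uk k))%:E))%E.

Definition L2_frechet_gradient (f : (T -> R) -> R) (df : (T -> R) -> (T -> R))
  : Prop :=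
  forall u, inL2 u ->
    inL2 (df u) /\
    forall eps : R, 0 < eps -> exists2 delta : R, 0 < delta &
      forall h, inL2 h -> normL2 h < delta ->
        `| f (u \+ h) - f u - ipL2 (df u) h | <= eps * normL2 h.

Definition L2_lipschitz (F : (T -> R) -> (T -> R)) (Lf : R) : Prop :=
  forall u v, inL2 u -> inL2 v -> normL2 (F u \- F v) <= Lf * normL2 (u \- v).

Definition AssumptionA (f : (T -> R) -> R) (df : (T -> R) -> (T -> R)) (Lf : R)
  : Prop :=
  [/\ L2_welldefined f, L2_bounded_below f, L2_weakly_lsc f,
      L2_frechet_gradient f df & L2_lipschitz df Lf].

Definition prox_objective (f : (T -> R) -> R) (df : (T -> R) -> (T -> R))
  (g : R -> \bar R) (L : R) (uk u : T -> R) : \bar R :=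
  ((f uk)%:E + (ipL2 (df uk) (u \- uk))%:E
   + (L / 2 * normL2 (u \- uk) ^+ 2)%:E
   + \int[mu]_(x in Om) g (u x))%E.

Definition prox_grad_iterates (f : (T -> R) -> R) (df : (T -> R) -> (T -> R))
  (g : R -> \bar R) (L : R) (u : nat -> T -> R) : Prop :=
  (forall k, inL2 (u k)) /\
  forall k, forall v, inL2 v ->
    (prox_objective f df g L (u k) (u k.+1)
     <= prox_objective f df g L (u k) v)%E.

End L2.

Section AssumptionB.
Context {R : realType}.
Local Open Scope ereal_scope.

Definition twice_diff_near0 (g : R -> \bar R) (eps : R) : Prop :=
  (0 < eps)%R /\
  forall u : R, (0 < u < eps)%R ->
    g u \is a fin_num /\ derivable (fine \o g) u 1 /\
    derivable (derive1 (fine \o g)) u 1.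

Definition second_deriv (g : R -> \bar R) : R -> R := derive1 (derive1 (fine \o g)).

Definition AssumptionB (g : R -> \bar R) : Prop :=
  [/\ lower_semicontinuous g /\ (forall u, g (- u)%R = g u) /\ g 0%R = 0,
      (exists u : R, u != 0%R /\ g u < +oo),
      [\/ (exists eps, twice_diff_near0 g eps) /\
            -oo < limf_esup (fun u => (second_deriv g u)%:E) (0%R^'+) < 0,
          (exists eps, twice_diff_near0 g eps) /\
            second_deriv g u @[u --> 0%R^'+] --> -oo%R
        | 0 < limf_einf g (0%R^'+)]
    & forall u, 0 <= g u].

End AssumptionB.

From HB Require Import structures.
From mathcomp Require Import all_boot all_order all_algebra.
From mathcomp Require Import all_classical all_reals all_analysis.
From mathcomp Require Import measurable_realfun.
From mathcomp Require Import ring lra.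

(** The proof is the classical sufficient-decrease argument.
    - Hilbert-space facts on [L^2(Om)]: closure under linear combinations,
      bilinearity of the inner product and Cauchy-Schwarz.
    - The descent lemma [f(u + h) <= f u + <df u, h> + Lf/2 ||h||^2], obtained by
      the mean value theorem along the segment [u + t h], using Cauchy-Schwarz
      and the Lipschitz continuity of [df].
    - Comparing the minimizer [u_(k+2)] with the competitor [u_(k+1)] and
      applying the descent lemma, the energy [f + int g] decreases by at least
      [(L - Lf)/2 ||u_(k+2) - u_(k+1)||^2] at each step.
    - The energy is bounded below ([f] is bounded below, [g >= 0]), so the
      squared step lengths have bounded partial sums; by monotone convergence
      [sum_k |u_(k+1) - u_k|^2] is integrable, hence finite a.e., and its terms
      tend to 0 a.e. Only [g(0) = 0] and [g >= 0] from Assumption B are needed. *)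

Set Implicit Arguments.
Unset Strict Implicit.
Unset Printing Implicit Defensive.
Import Order.TTheory GRing.Theory Num.Theory.
Import numFieldNormedType.Exports.
Local Open Scope classical_set_scope.
Local Open Scope ring_scope.

(** Pointwise Young inequality [|ab| <= a^2 + b^2]; it makes products of
    square-integrable functions integrable. *)
Lemma normM_le_sqrD {R : realDomainType} (a b : R) : `|a * b| <= a ^+ 2 + b ^+ 2.
Proof.
rewrite normrM -(real_normK (num_real a)) -(real_normK (num_real b)).
have := sqr_ge0 (`|a| - `|b|); have := normr_ge0 a; have := normr_ge0 b.
move: `|a| `|b| => x y y0 x0 h; nra.
Qed.

(** Discriminant form of Cauchy-Schwarz: if the quadratic bound
    [2 l P <= l^2 A + B] holds for every [l > 0], then [P <= sqrt A * sqrt B]. *)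
Lemma le_sqrtM_of_quadratic {R : rcfType} (P A B : R) : 0 <= A -> 0 <= B ->
  (forall l, 0 < l -> 2 * l * P <= l ^+ 2 * A + B) -> P <= Num.sqrt A * Num.sqrt B.
Proof.
move=> A0 B0; rewrite -{1}(sqr_sqrtr A0) -{1}(sqr_sqrtr B0).
have := sqrtr_ge0 A; have := sqrtr_ge0 B.
move: (Num.sqrt A) (Num.sqrt B) => s r r0 s0 h.
rewrite leNgt; apply/negP => Pgt.
have P0 : 0 < P by apply: le_lt_trans Pgt; exact: mulr_ge0.
have [s00|sn0] := eqVneq s 0.
  move: h; rewrite s00 => h.
  have := h ((r ^+ 2 + 1) / P) (divr_gt0 (ltr_wpDl (sqr_ge0 _) ltr01) P0).
  have -> : 2 * ((r ^+ 2 + 1) / P) * P = 2 * (r ^+ 2 + 1) by field; rewrite gt_eqF.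
  rewrite expr0n /= mulr0 add0r; nra.
have s1 : 0 < s by rewrite lt_def sn0 s0.
(* the optimal choice [l = P / s^2] gives [P^2 <= r^2 s^2] *)
have := h (P / s ^+ 2) (divr_gt0 P0 (exprn_gt0 2 s1)).
have -> : 2 * (P / s ^+ 2) * P = 2 * (P ^+ 2 / s ^+ 2) by field.
have -> : (P / s ^+ 2) ^+ 2 * s ^+ 2 = P ^+ 2 / s ^+ 2 by field.
move=> h2; have : P ^+ 2 / s ^+ 2 <= r ^+ 2 by lra.
rewrite ler_pdivrMr ?exprn_gt0 // => hP.
have := ltr_pM (mulr_ge0 s0 r0) (mulr_ge0 s0 r0) Pgt Pgt; nra.
Qed.

Lemma is_derive_mulr_cst {R : realType} (c t : R) : is_derive t 1 (fun t => t * c) c.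
Proof.
have := @is_deriveM R R^o id (cst c) t 1 1 0 _ _.
by rewrite /= scaler0 add0r scaler1; apply.
Qed.

Lemma is_derive_scaled_sqr {R : realType} (k t : R) :
  is_derive t 1 (fun t => k * t ^+ 2) (2 * k * t).
Proof.
have hX := @is_deriveX R R^o id 2 t 1 1 (is_derive_id _ _).
apply: is_derive_eq (is_deriveZ k hX) _.
by rewrite expr1 scaler1 -mulrA mulrCA.
Qed.

Lemma is_derive_of_quotient {R : realType} (F : R -> R) (t D : R) :
  (forall e, 0 < e -> exists2 del, 0 < del & forall s, s != 0 -> `|s| < del ->
     `|(F (s + t) - F t) / s - D| <= e) -> is_derive t 1 F D.
Proof.
move=> h.
have hc : (fun s : R => s^-1 *: ((F \o shift t) (s *: 1) - F t)) @ 0^' --> D.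
  apply/cvgrPdist_le => e e0; have [del del0 hd] := h e e0.
  rewrite near_withinE; apply/nbhs_ballP; exists del => // s.
  rewrite /ball /= sub0r normrN => hs sn0.
  rewrite distrC /= [s%:A]mulr1 [_ *: _]mulrC.
  exact: hd.
by split; [apply/cvg_ex; exists D | exact: cvg_lim].
Qed.

(** * The Hilbert space structure of [L^2(Om)] used in the proof *)
Section L2Space.
Context {d : measure_display} {T : measurableType d} {R : realType}.
Variables (mu : {measure set T -> \bar R}) (Om : set T).
Hypothesis mOm : measurable Om.

(** Integrability facts: [0] is in [L^2], and squares and products of
    [L^2] functions are integrable, so [ipL2] and [normL2] are honest integrals. *)
Lemma inL2_cst0 : inL2 mu Om (fun _ => 0).
Proof.
split; first exact: measurable_cst.
by under eq_integral do rewrite expr0n /=; rewrite integral0 ltry.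
Qed.

Lemma sqr_integrable u : inL2 mu Om u -> mu.-integrable Om (EFin \o (fun x => u x ^+ 2)).
Proof.
move=> [mu1 fu]; apply/integrableP; split.
  by apply/measurable_EFinP; apply: measurable_funX.
by under eq_integral do rewrite /= ger0_norm ?sqr_ge0 //.
Qed.

Lemma mul_integrable u v : inL2 mu Om u -> inL2 mu Om v ->
  mu.-integrable Om (EFin \o (fun x => u x * v x)).
Proof.
move=> [mu1 fu] [mv fv]; apply/integrableP; split.
  by apply/measurable_EFinP; apply: measurable_funM.
apply: (@le_lt_trans _ _ (\int[mu]_(x in Om) ((u x ^+ 2)%:E + (v x ^+ 2)%:E))%E).
  apply: ge0_le_integral => //.
  - apply/measurable_EFinP; apply: measurableT_comp => //.
    exact: measurable_funM.
  - by apply: emeasurable_funD; apply/measurable_EFinP; apply: measurable_funX.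
  - by move=> x _; rewrite /= lee_fin normM_le_sqrD.
rewrite ge0_integralD //; first by rewrite lte_add_pinfty.
all: try by move=> x _; rewrite lee_fin sqr_ge0.
all: by apply/measurable_EFinP; apply: measurable_funX.
Qed.

Lemma inL2_lincomb (u v : T -> R) (s t : R) : inL2 mu Om u -> inL2 mu Om v ->
  inL2 mu Om (fun x => s * u x + t * v x).
Proof.
move=> iu iv.
have mw : measurable_fun Om (fun x => s * u x + t * v x).
  by apply: measurable_funD; apply: measurable_funM;
    [exact: measurable_cst | case: iu | exact: measurable_cst | case: iv].
split=> //.
pose c := 2 * (s ^+ 2 + t ^+ 2).
have sq_bound : forall x, (s * u x + t * v x) ^+ 2 <= c * (u x ^+ 2 + v x ^+ 2).
  move=> x; have := sqr_ge0 (s * u x - t * v x); have := sqr_ge0 (s * v x).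
  have := sqr_ge0 (t * u x); rewrite /c; move: (u x) (v x) => a b h1 h2 h3; nra.
have : mu.-integrable Om (EFin \o (fun x => (s * u x + t * v x) ^+ 2)).
  apply: (@le_integrable _ _ _ mu Om mOm _ (fun x => (c%:E *
     ((EFin \o (fun y => (u y ^+ 2)%R)) \+ (EFin \o (fun y => (v y ^+ 2)%R))) x)%E)).
  - by apply/measurable_EFinP; apply: measurable_funX.
  - move=> x _ /=; rewrite lee_fin ger0_norm ?sqr_ge0 //.
    exact: le_trans (sq_bound x) (ler_norm _).
  - exact: (integrableZl mOm c (integrableD mOm (sqr_integrable iu) (sqr_integrable iv))).
move/integrableP => [_]; apply: le_lt_trans; rewrite le_eqVlt; apply/orP; left.
by apply/eqP; apply: eq_integral => x _; rewrite /= ger0_norm ?sqr_ge0.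
Qed.

Lemma inL2_addZ (u v : T -> R) (t : R) : inL2 mu Om u -> inL2 mu Om v ->
  inL2 mu Om (fun x => u x + t * v x).
Proof.
move=> iu iv; have := inL2_lincomb 1 t iu iv.
by under eq_fun do rewrite mul1r.
Qed.

Lemma inL2Z (v : T -> R) (t : R) : inL2 mu Om v -> inL2 mu Om (fun x => t * v x).
Proof.
move=> iv; have := inL2_addZ t inL2_cst0 iv.
by under eq_fun do rewrite add0r.
Qed.

Lemma inL2B (u v : T -> R) : inL2 mu Om u -> inL2 mu Om v -> inL2 mu Om (u \- v).
Proof.
move=> iu iv; have := inL2_addZ (-1) iu iv.
by under eq_fun do rewrite mulN1r.
Qed.

Lemma ipL2C (a b : T -> R) : ipL2 mu Om a b = ipL2 mu Om b a.
Proof. by apply: eq_Rintegral => x _; rewrite mulrC. Qed.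

Lemma ipL2B (a b c : T -> R) : inL2 mu Om a -> inL2 mu Om b -> inL2 mu Om c ->
  ipL2 mu Om a (b \- c) = ipL2 mu Om a b - ipL2 mu Om a c.
Proof.
move=> ia ib ic; rewrite /ipL2 -RintegralB ?mul_integrable //.
by apply: eq_Rintegral => x _; rewrite mulrBr.
Qed.

Lemma ipL2Z (a h : T -> R) (s : R) : inL2 mu Om a -> inL2 mu Om h ->
  ipL2 mu Om a (fun x => s * h x) = s * ipL2 mu Om a h.
Proof.
move=> ia ih; rewrite /ipL2 -RintegralZl ?mul_integrable //.
by apply: eq_Rintegral => x _; rewrite mulrCA.
Qed.

Lemma normL2_ge0 h : 0 <= normL2 mu Om h.
Proof. exact: sqrtr_ge0. Qed.

Lemma normL2_sqr h : normL2 mu Om h ^+ 2 = \int[mu]_(x in Om) (h x ^+ 2).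
Proof. by rewrite sqr_sqrtr //; apply: Rintegral_ge0 => x _; exact: sqr_ge0. Qed.

Lemma normL2Z (h : T -> R) (s : R) : inL2 mu Om h ->
  normL2 mu Om (fun x => s * h x) = `|s| * normL2 mu Om h.
Proof.
move=> ih; rewrite /normL2 -sqrtr_sqr -sqrtrM ?sqr_ge0 // -RintegralZl ?sqr_integrable //.
by congr Num.sqrt; apply: eq_Rintegral => x _; rewrite exprMn.
Qed.

(** Cauchy-Schwarz inequality in [L^2(Om)], from the pointwise bound
    [2 l a h <= l^2 a^2 + h^2] integrated over [Om]. *)
Lemma ipL2_le_normL2 (a h : T -> R) : inL2 mu Om a -> inL2 mu Om h ->
  ipL2 mu Om a h <= normL2 mu Om a * normL2 mu Om h.
Proof.
move=> ia ih; apply: le_sqrtM_of_quadratic;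
  try by apply: Rintegral_ge0 => x _; exact: sqr_ge0.
move=> l l0.
have la2 : mu.-integrable Om (EFin \o (fun x => l ^+ 2 * a x ^+ 2)).
  have := sqr_integrable (inL2Z l ia).
  by under eq_fun do rewrite exprMn.
have -> : 2 * l * ipL2 mu Om a h = \int[mu]_(x in Om) (2 * l * (a x * h x)).
  by rewrite RintegralZl ?mul_integrable.
have -> : l ^+ 2 * \int[mu]_(x in Om) (a x ^+ 2) + \int[mu]_(x in Om) (h x ^+ 2)
    = \int[mu]_(x in Om) (l ^+ 2 * a x ^+ 2 + h x ^+ 2).
  by rewrite RintegralD ?sqr_integrable // RintegralZl ?sqr_integrable.
apply: le_Rintegral => //.
- have := mul_integrable ia (inL2Z (2 * l) ih).
  by under eq_fun do rewrite mulrCA.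
- exact: (integrableD mOm la2 (sqr_integrable ih)).
- by move=> x _; have := sqr_ge0 (l * a x - h x); nra.
Qed.

(** Monotone convergence argument: if nonnegative integrable functions have
    uniformly bounded partial sums of integrals, then their series is
    integrable, hence finite almost everywhere, so its terms tend to 0 a.e. *)
Lemma ae_cvg0_of_bounded_sum_integral (D : nat -> T -> R) (C : R) :
  (forall j x, Om x -> 0 <= D j x) -> (forall j, mu.-integrable Om (EFin \o D j)) ->
  (forall N, \sum_(0 <= j < N) \int[mu]_(x in Om) D j x <= C) ->
  {ae mu, forall x, Om x -> D j x @[j --> \oo] --> 0}.
Proof.
move=> D0 iD hC.
have eD0 j x : Om x -> (0 <= (D j x)%:E)%E by move=> Ox; rewrite lee_fin D0.
have mD j : measurable_fun Om (EFin \o D j) by exact: measurable_int (iD j).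
pose S x := (\sum_(0 <= j <oo) (D j x)%:E)%E.
have S0 x : Om x -> (0 <= S x)%E by move=> Ox; apply: nneseries_ge0 => j _ _; exact: eD0.
have int_S : (\int[mu]_(x in Om) S x <= C%:E)%E.
  rewrite /S integral_nneseries //.
  apply: lime_le.
    by apply: is_cvg_nneseries => n _ _; apply: integral_ge0 => y; exact: eD0.
  near=> N; under eq_bigr => j _ do rewrite -(fineK (integrable_fin_num mOm (iD j))).
  by rewrite sumEFin lee_fin.
have iS : mu.-integrable Om S.
  apply/integrableP; split.
    exact: ge0_emeasurable_sum (fun j x Ox _ => eD0 j x Ox) (fun j _ => mD j).
  apply: le_lt_trans (ltry C).
  by under eq_integral => x /[!inE] Ox do rewrite gee0_abs ?S0 //.
apply: filterS (integrable_ae mOm iS) => x Sfin Ox.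
have partial_le N : ((\sum_(0 <= j < N) D j x)%:E <= S x)%E.
  by rewrite -sumEFin; apply: nneseries_lim_ge => j _ _; exact: eD0.
apply: cvg_series_cvg_0; apply: nondecreasing_is_cvgn.
  by apply: nondecreasing_series => j _ _; exact: D0.
exists (fine (S x)) => _ [N _ <-].
by rewrite -lee_fin fineK ?Sfin //; exact: partial_le.
Unshelve. all: by end_near.
Qed.

Lemma ae_cvg0_of_bounded_sum_sqr (w : nat -> T -> R) (C : R) :
  (forall j, inL2 mu Om (w j)) ->
  (forall N, \sum_(0 <= j < N) \int[mu]_(x in Om) (w j x ^+ 2) <= C) ->
  {ae mu, forall x, Om x -> w j x @[j --> \oo] --> 0}.
Proof.
move=> iw hC.
have := @ae_cvg0_of_bounded_sum_integral (fun j x => w j x ^+ 2) C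
  (fun j x _ => sqr_ge0 (w j x)) (fun j => sqr_integrable (iw j)) hC.
apply: filterS => x hx Ox; apply/norm_cvg0P.
under eq_fun do rewrite -sqrtr_sqr.
by rewrite -sqrtr0; apply: continuous_cvg; [exact: sqrt_continuous | exact: hx].
Qed.
End L2Space.

(** * The descent lemma for functionals with Lipschitz gradient *)
Section Descent.
Context {d : measure_display} {T : measurableType d} {R : realType}.
Variables (mu : {measure set T -> \bar R}) (Om : set T).
Hypothesis mOm : measurable Om.
Variables (f : (T -> R) -> R) (df : (T -> R) -> (T -> R)).
Hypothesis f_grad : L2_frechet_gradient mu Om f df.

Lemma is_derive_along_line (u h : T -> R) (t : R) : inL2 mu Om u -> inL2 mu Om h ->
  is_derive t 1 (fun t => f (fun x => u x + t * h x))
    (ipL2 mu Om (df (fun x => u x + t * h x)) h).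
Proof.
move=> iu ih; apply: is_derive_of_quotient => e e0.
set w := (fun x => u x + t * h x).
have iw : inL2 mu Om w := inL2_addZ mOm t iu ih.
set n := normL2 mu Om h.
have n0 : 0 <= n := normL2_ge0 mu Om h.
have n1 : 0 < n + 1 by rewrite ltr_wpDl.
have [idw /(_ (e / (n + 1)) (divr_gt0 e0 n1)) [delta delta0 hd]] := f_grad iw.
exists (delta / (n + 1)); first by rewrite divr_gt0.
move=> s sn0; rewrite ltr_pdivlMr // => s_small.
have := hd _ (inL2Z mOm s ih); rewrite normL2Z // ipL2Z //.
have -> : w \+ (fun x => s * h x) = (fun x => u x + (s + t) * h x).
  by apply/funext => x; rewrite /w /=; ring.
have s0 : 0 < `|s| by rewrite normr_gt0.
have /[swap]/[apply] : `|s| * n < delta.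
  by apply: le_lt_trans s_small; rewrite ler_pM2l //; lra.
set N := f _ - f w; set Dw := ipL2 mu Om (df w) h.
have -> : N / s - Dw = (N - s * Dw) / s by field.
rewrite normrM normfV ler_pdivrMr // => /le_trans; apply.
have : e / (n + 1) * (n + 1) = e by rewrite divfK // gt_eqF.
have : 0 <= e / (n + 1) by rewrite divr_ge0 // ltW.
move: (e / (n + 1)) => q q0 qe; rewrite -/n; nra.
Qed.

Variable Lf : R.
Hypothesis df_lipschitz : L2_lipschitz mu Om df Lf.

(** Descent lemma: [f(u + h) <= f u + <df u, h> + Lf/2 ||h||^2], by the mean
    value theorem applied to [t |-> f(u + t h) - t <df u, h> - t^2 Lf/2 ||h||^2]. *)
Lemma descent_lemma (u h : T -> R) : inL2 mu Om u -> inL2 mu Om h ->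
  f (fun x => u x + h x) <=
  f u + ipL2 mu Om (df u) h + Lf / 2 * normL2 mu Om h ^+ 2.
Proof.
move=> iu ih.
set n := normL2 mu Om h; set c0 := ipL2 mu Om (df u) h; set k := Lf / 2 * n ^+ 2.
have n0 : 0 <= n := normL2_ge0 mu Om h.
pose line t := fun x => u x + t * h x.
pose psi t := f (line t) - t * c0 - k * t ^+ 2.
pose dpsi t := ipL2 mu Om (df (line t)) h - c0 - 2 * k * t.
have psi_deriv (t : R) : is_derive t 1 psi (dpsi t).
  exact: is_deriveB (is_deriveB (is_derive_along_line t iu ih)
    (is_derive_mulr_cst c0 t)) (is_derive_scaled_sqr k t).
have [c /[!in_itv] /= /andP[c0_pos _] mvt] : exists2 c, c \in `]0, 1[ &
    psi 1 - psi 0 = dpsi c * (1 - 0).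
  apply: MVT ltr01 (fun x _ => psi_deriv x) _.
  apply: derivable_within_continuous => x _.
  exact: (@ex_derive _ _ _ _ _ _ _ (psi_deriv x)).
(* the Lipschitz bound and Cauchy-Schwarz give [dpsi c <= 0] *)
have dpsi_le0 : dpsi c <= 0.
  have iw : inL2 mu Om (line c) := inL2_addZ mOm c iu ih.
  have [[idw _] [idu _]] := (f_grad iw, f_grad iu).
  have gap : ipL2 mu Om (df (line c)) h - c0 =
      ipL2 mu Om h (df (line c) \- df u).
    by rewrite ipL2B // ipL2C [ipL2 _ _ h (df u)]ipL2C.
  have cs := ipL2_le_normL2 mOm ih (inL2B mOm idw idu).
  have lip := df_lipschitz iw iu.
  rewrite (_ : line c \- u = (fun x => c * h x)) in lip; last first.
    by apply/funext => x; rewrite /line /=; ring.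
  rewrite normL2Z // gtr0_norm // -/n in lip.
  have := normL2_ge0 mu Om (df (line c) \- df u).
  rewrite /dpsi gap /k; move: cs lip; rewrite -/n.
  move: (ipL2 _ _ _ _) (normL2 _ _ (_ \- _)) => P N; nra.
have line0 : line 0 = u by apply/funext => x; rewrite /line mul0r addr0.
have line1 : line 1 = (fun x => u x + h x) by apply/funext => x; rewrite /line mul1r.
have : psi 1 <= psi 0 by rewrite -subr_le0 mvt subr0 mulr1.
rewrite /psi line0 line1; lra.
Qed.
End Descent.

(** * Proximal gradient iterates *)

Definition penalty {d : measure_display} {T : measurableType d} {R : realType}
  (mu : {measure set T -> \bar R}) (Om : set T) (g : R -> \bar R) (v : T -> R) : \bar R :=
  (\int[mu]_(x in Om) g (v x))%E.

Section ProximalGradient.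
Context {d : measure_display} {T : measurableType d} {R : realType}.
Variables (mu : {measure set T -> \bar R}) (Om : set T).
Hypothesis mOm : measurable Om.
Variables (f : (T -> R) -> R) (df : (T -> R) -> (T -> R)) (g : R -> \bar R).
Hypotheses (g_ge0 : forall r, (0 <= g r)%E) (g0 : g 0 = 0%E).
Variables (L : R) (u : nat -> T -> R).
Hypothesis iterates : prox_grad_iterates mu Om f df g L u.

Local Notation G := (penalty mu Om g).

Lemma penalty_ge0 v : (0 <= G v)%E.
Proof. by apply: integral_ge0 => x _; exact: g_ge0. Qed.

Lemma prox_objective_center (v : T -> R) :
  prox_objective mu Om f df g L v v = ((f v)%:E + G v)%E.
Proof.
have zero_int (F : T -> R) : (forall x, F x = 0) -> \int[mu]_(x in Om) F x = 0.
  by move=> F0; rewrite (eq_Rintegral _ (fun x _ => F0 x)) Rintegral_cst // mul0r.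
rewrite /prox_objective /ipL2 /normL2 !zero_int => [|x|x]; last 2 first.
- by rewrite /= subrr expr0n.
- by rewrite /= subrr mulr0.
by rewrite sqrtr0 expr0n /= mulr0 !adde0.
Qed.

(** Comparing with the competitor [v = 0] shows that every iterate after the
    first has finite penalty. *)
Lemma penalty_iterate_fin k : G (u k.+1) \is a fin_num.
Proof.
have G_zero : G (fun=> 0%R) = 0%E.
  by rewrite /penalty; under eq_integral do rewrite g0; exact: integral0.
have := iterates.2 k _ (inL2_cst0 mu Om).
rewrite /prox_objective -/(G (u k.+1)) -/(G (fun=> 0%R)) G_zero adde0 -!EFinD.
by have := penalty_ge0 (u k.+1); case: (G (u k.+1)).
Qed.

Let energy k := f (u k.+1) + fine (G (u k.+1)).

Lemma energy_ge (m : R) : (forall v, inL2 mu Om v -> m <= f v) -> forall k, m <= energy k.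
Proof.
move=> f_ge k; have := f_ge _ (iterates.1 k.+1).
have : 0 <= fine (G (u k.+1)) by apply: fine_ge0; exact: penalty_ge0.
rewrite /energy; lra.
Qed.

Variable Lf : R.
Hypotheses (f_grad : L2_frechet_gradient mu Om f df)
  (df_lipschitz : L2_lipschitz mu Om df Lf).

(** Sufficient decrease: minimality of [u_(k+2)] against the competitor
    [u_(k+1)], combined with the descent lemma, gives
    [(L - Lf)/2 ||u_(k+2) - u_(k+1)||^2 <= energy k - energy (k+1)]. *)
Lemma sufficient_decrease k :
  (L - Lf) / 2 * normL2 mu Om (u k.+2 \- u k.+1) ^+ 2 <= energy k - energy k.+1.
Proof.
have istep := inL2B mOm (iterates.1 k.+2) (iterates.1 k.+1).
have opt := iterates.2 k.+1 _ (iterates.1 k.+1).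
rewrite prox_objective_center /prox_objective -/(G (u k.+2)) in opt.
rewrite -(fineK (penalty_iterate_fin k.+1)) -(fineK (penalty_iterate_fin k)) in opt.
rewrite -!EFinD lee_fin in opt.
have := descent_lemma mOm f_grad df_lipschitz (iterates.1 k.+1) istep.
have -> : (fun x => u k.+1 x + (u k.+2 \- u k.+1) x) = u k.+2.
  by apply/funext => x /=; ring.
rewrite /energy; move: opt; move: (normL2 _ _ _ ^+ 2) (ipL2 _ _ _ _) => X I; nra.
Qed.

Lemma bounded_sum_sqr_steps (m : R) : (forall v, inL2 mu Om v -> m <= f v) ->
  forall N, \sum_(0 <= j < N) (L - Lf) / 2 * normL2 mu Om (u j.+2 \- u j.+1) ^+ 2
    <= energy 0 - m.
Proof.
move=> f_ge N; apply: le_trans (_ : energy 0 - energy N <= _); last first.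
  by have := energy_ge f_ge N; lra.
elim: N => [|N IH]; first by rewrite big_geq // subrr.
by rewrite big_nat_recr //=; have := sufficient_decrease N; lra.
Qed.

End ProximalGradient.

Theorem corollary4p5 (d : measure_display) (T : measurableType d) (R : realType)
  (mu : {measure set T -> \bar R}) (Om : set T)
  (f : (T -> R) -> R) (df : (T -> R) -> (T -> R)) (Lf : R)
  (g : R -> \bar R) (L : R) (u : nat -> T -> R) :
  measurable Om -> (mu Om < +oo)%E ->
  AssumptionA mu Om f df Lf -> AssumptionB g ->
  0 < L -> Lf < L ->
  prox_grad_iterates mu Om f df g L u ->
  {ae mu, forall x, Om x -> (u k.+1 x - u k x) @[k --> \oo] --> 0}.
Proof.
move=> mOm _ [_ [m f_ge] _ f_grad df_lip] [[_ [_ g0]] _ _ g_ge0] _ LfL iterates.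
have c_gt0 : 0 < (L - Lf) / 2 by rewrite divr_gt0 // subr_gt0.
have steps := bounded_sum_sqr_steps mOm g_ge0 g0 iterates f_grad df_lip f_ge.
pose C := (f (u 1) + fine (penalty mu Om g (u 1)) - m) / ((L - Lf) / 2).
have : {ae mu, forall x, Om x -> (u j.+2 x - u j.+1 x) @[j --> \oo] --> 0}.
  apply: (@ae_cvg0_of_bounded_sum_sqr _ _ _ mu Om mOm _ C) => [j|N].
    exact: (inL2B mOm (iterates.1 j.+2) (iterates.1 j.+1)).
  rewrite ler_pdivlMr // mulrC mulr_sumr.
  apply: le_trans (steps N); apply: ler_sum => j _.
  by rewrite normL2_sqr.
apply: filterS => x steps_cvg Ox.
by rewrite -cvg_shiftS; exact: steps_cvg.
Qed.
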